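(* Let $k$ be a field (or $k=\mathbb Z$), let $H$ be a hyperfield equipped with an arbitrary topology and a fixed homomorphism $k\to H$, and let $X=\operatorname{Spec}A$ be an affine $k$-scheme. Then the affine topology and the fine Zariski topology on $X(H)=\operatorname{Hom}_k(A,H)$ coincide.
   Context: Hyperfields and hyperring homomorphisms: a hyperring is a set with a commutative associative multi-valued addition forming a canonical hypergroup and a commutative monoid multiplication distributing over it with $x\cdot0=0$; a hyperfield has all nonzero elements invertible; a homomorphism $f$ satisfies $f(0)=0,f(1)=1,f(xy)=f(x)f(y),f(x+y)\subseteq f(x)+f(y)$. For a scheme $X$ over $k$, $X(H)$ denotes the set of morphisms of locally hyperringed spaces $\operatorname{Spec}H\to X$ compatible with $\operatorname{Spec}H\to\operatorname{Spec}k$; for $X=\operatorname{Spec}A$ this is identified with $\operatorname{Hom}_k(A,H)$, the hyperring homomorphisms $A\to H$ restricting to the fixed map on $k$. No compatibility between the topology of $H$ and its algebraic operations is assumed. Affine topology on $\operatorname{Hom}_k(A,H)$: the subspace topology from $\operatorname{Hom}_k(A,H)\subseteq\prod_{a\in A}H$ with the product topology (equivalently the coarsest topology making all evaluation maps $f\mapsto f(a)$ continuous). Fine Zariski topology on $X(H)$: the finest topology such that for every affine $k$-scheme $Y$ and every $k$-morphism $g:Y\to X$, the induced map $g(H):Y(H)\to X(H)$, $p\mapsto g\circ p$, is continuous, where $Y(H)$ carries the affine topology. *)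

From HB Require Import structures.
From Stdlib Require List.
From mathcomp Require Import all_boot all_order all_algebra.
Set Implicit Arguments. Unset Strict Implicit. Unset Printing Implicit Defensive.
Import GRing.Theory.
Local Open Scope ring_scope.

Record topology (T : Type) := Topology {
  top_open : (T -> Prop) -> Prop;
  top_open_full : top_open (fun _ => True);
  top_open_inter : forall U V, top_open U -> top_open V ->
                     top_open (fun x => U x /\ V x);
  top_open_union : forall F : (T -> Prop) -> Prop,
      (forall U, F U -> top_open U) -> top_open (fun x => exists2 U, F U & U x)
}.

(* [hadd x y z] means  z \in x + y  (multi-valued addition). *)
Record hyperfield := HyperField {
  hcarrier :> Type;
  hzero : hcarrier;
  hone : hcarrier;
  hadd : hcarrier -> hcarrier -> hcarrier -> Prop;
  hmul : hcarrier -> hcarrier -> hcarrier;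
  hadd_nonempty : forall x y, exists z, hadd x y z;
  hadd_comm : forall x y z, hadd x y z <-> hadd y x z;
  hadd_assoc : forall x y z t,
      (exists2 w, hadd x y w & hadd w z t) <-> (exists2 w, hadd y z w & hadd x w t);
  hadd_0 : forall x z, hadd x hzero z <-> z = x;
  hadd_inv : forall x, exists y, hadd x y hzero /\
                 forall y', hadd x y' hzero -> y' = y;
  hadd_rev : forall x y z y', hadd y y' hzero -> hadd y z x -> hadd x y' z;
  hmul_assoc : forall x y z, hmul x (hmul y z) = hmul (hmul x y) z;
  hmul_comm : forall x y, hmul x y = hmul y x;
  hmul_1 : forall x, hmul hone x = x;
  hmul_0 : forall x, hmul x hzero = hzero;
  hmul_distr : forall a x y w,
      hadd (hmul a x) (hmul a y) w <-> exists2 z, hadd x y z & w = hmul a z;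
  hzero_neq_one : hzero <> hone;
  hmul_inv : forall x, x <> hzero -> exists y, hmul x y = hone
}.

(* Hyperring homomorphism from an ordinary ring (viewed as a hyperring with
   x + y = {x + y}) to a hyperfield. *)
Definition hhom (R : pzRingType) (H : hyperfield) (f : R -> H) : Prop :=
  [/\ f 0 = hzero H, f 1 = hone H,
      (forall x y, f (x * y) = hmul (f x) (f y)) &
      (forall x y, hadd (f x) (f y) (f (x + y)))].

Definition khom (k : pzRingType) (H : hyperfield) (iH : k -> H)
    (A : comPzRingType) (iA : k -> A) (f : A -> H) : Prop :=
  hhom f /\ forall c, f (iA c) = iH c.

(* Subsets of Hom_k(A,H) are represented by predicates on A -> H; only their
   values on homomorphisms matter. *)

(* Affine topology: subspace topology of the product topology on
   prod_{a in A} H, i.e. U is open iff each point f of U has a basic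
   neighbourhood  {g | g a_i \in V_i, i = 1..n}  (V_i open in H) inside U. *)
Definition affine_open (k : pzRingType) (H : hyperfield) (TH : topology H)
    (iH : k -> H) (A : comPzRingType) (iA : k -> A) (U : (A -> H) -> Prop)
    : Prop :=
  forall f, khom iH iA f -> U f ->
    exists l : seq (A * (H -> Prop)),
      [/\ (forall aV, List.In aV l -> top_open TH aV.2),
          (forall aV, List.In aV l -> aV.2 (f aV.1)) &
          (forall g, khom iH iA g ->
                (forall aV, List.In aV l -> aV.2 (g aV.1)) -> U g)].

(* Fine Zariski topology on X(H), X = Spec A: the finest topology such that
   for every affine k-scheme Y = Spec B and every k-morphism g : Y -> X
   (i.e. every k-algebra map phi : A -> B), g(H) : Y(H) -> X(H),
   p |-> p o phi, is continuous for the affine topology on Y(H).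
   (Final topology: U is open iff all these preimages are open.) *)
Definition fine_open (k : pzRingType) (H : hyperfield) (TH : topology H)
    (iH : k -> H) (A : comPzRingType) (iA : k -> A) (U : (A -> H) -> Prop)
    : Prop :=
  forall (B : comPzRingType) (iB : {rmorphism k -> B})
         (phi : {rmorphism A -> B}),
    (forall c, phi (iA c) = iB c) ->
    affine_open TH iH iB (fun p : B -> H => U (p \o phi)).

From HB Require Import structures.
From mathcomp Require Import all_boot all_order all_algebra.
From Stdlib Require List.
Import GRing.Theory.
Local Open Scope ring_scope.

(* The identity of A is a k-morphism, so a fine Zariski open set is affine
   open.  Conversely, every map g(H) : p |-> p \o phi induced by a k-algebra
   map phi : A -> B is continuous for the affine topologies, because it pulls
   the basic neighbourhood {q | q a_i \in V_i} back to {p | p (phi a_i) \in V_i}. *)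

Section Precomposition.

Variables (k : pzRingType) (H : hyperfield) (iH : k -> H).
Variables (A B : comPzRingType) (iA : k -> A) (iB : k -> B).
Variable phi : {rmorphism A -> B}.
Hypothesis phi_k : forall c, phi (iA c) = iB c.

Lemma khom_comp {p : B -> H} : khom iH iB p -> khom iH iA (p \o phi).
Proof.
case=> [[p0 p1 pM pD] pk]; split; last by move=> c /=; rewrite phi_k pk.
split=> /=; first by rewrite rmorph0.
- by rewrite rmorph1.
- by move=> x y; rewrite rmorphM.
- by move=> x y; rewrite rmorphD.
Qed.

Lemma affine_open_comp (TH : topology H) (U : (A -> H) -> Prop) :
  affine_open TH iH iA U -> affine_open TH iH iB (fun p => U (p \o phi)).
Proof.
move=> openU p hom_p Up.
have [l [l_open l_p l_sub]] := openU _ (khom_comp hom_p) Up.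
pose phi_l := map (fun aV : A * (H -> Prop) => (phi aV.1, aV.2)) l.
have in_phi_l bV : List.In bV phi_l -> exists2 aV, List.In aV l & bV = (phi aV.1, aV.2).
  by case/List.in_map_iff=> aV [<- in_aV]; exists aV.
exists phi_l; split.
- by move=> _ /in_phi_l [aV in_aV ->]; exact: l_open.
- by move=> _ /in_phi_l [aV in_aV ->]; exact: l_p.
- move=> q hom_q q_l; apply: l_sub (khom_comp hom_q) _ => aV in_aV.
  by apply: (q_l (phi aV.1, aV.2)); exact: List.in_map.
Qed.

End Precomposition.

Lemma affine_open_iff_fine_open (k : pzRingType) (H : hyperfield)
    (TH : topology H) (iH : k -> H) (A : comPzRingType)
    (iA : {rmorphism k -> A}) (U : (A -> H) -> Prop) :
  affine_open TH iH iA U <-> fine_open TH iH iA U.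
Proof.
split=> [openU B iB phi phi_k | fineU]; first exact: affine_open_comp.
exact: (fineU A iA idfun).
Qed.

Theorem proposition3p18 :
  (forall (k : fieldType) (H : hyperfield) (TH : topology H) (iH : k -> H),
     hhom iH ->
     forall (A : comPzRingType) (iA : {rmorphism k -> A})
            (U : (A -> H) -> Prop),
       affine_open TH iH iA U <-> fine_open TH iH iA U)
  /\
  (forall (H : hyperfield) (TH : topology H) (iH : int -> H),
     hhom iH ->
     forall (A : comPzRingType) (iA : {rmorphism int -> A})
            (U : (A -> H) -> Prop),
       affine_open TH iH iA U <-> fine_open TH iH iA U).
Proof.
by split=> *; apply: affine_open_iff_fine_open.
Qed.
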